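(* Let $G$ be a finite graph and $K$ a maximal clique of $G$. Then $\log_2(\log_2(|\widetilde{K}|))\le\rho(K,N(K))$.
   Context: Two vertices are equivalent if they lie in exactly the same maximal cliques of $G$; $\widetilde{K}$ is the set of equivalence classes intersecting $K$. $N(K)$ is the set of vertices outside $K$ with a neighbour in $K$. For disjoint $X,Y\subseteq V(G)$, the local cutrank $\rho(X,Y)$ is the rank over $\mathbb{F}_2$ of the submatrix of the adjacency matrix of $G$ with rows indexed by $X$ and columns indexed by $Y$. *)

From mathcomp Require Import all_boot all_order all_algebra.
From Stdlib Require Import Reals.
Set Implicit Arguments. Unset Strict Implicit. Unset Printing Implicit Defensive.
Import GRing.Theory.

Definition simple_graph (T : finType) (e : rel T) : Prop :=
  symmetric e /\ irreflexive e.

Definition is_clique (T : finType) (e : rel T) (K : {set T}) : bool :=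
  [forall x in K, forall y in K, (x != y) ==> e x y].

Definition is_maximal_clique (T : finType) (e : rel T) (K : {set T}) : bool :=
  is_clique e K &&
  [forall K' : {set T}, (is_clique e K' && (K \subset K')) ==> (K' == K)].

Definition mc_equiv (T : finType) (e : rel T) (u v : T) : bool :=
  [forall C : {set T}, is_maximal_clique e C ==> ((u \in C) == (v \in C))].

Definition mc_class (T : finType) (e : rel T) (v : T) : {set T} :=
  [set u | mc_equiv e u v].

(* \widetilde{K}: the set of equivalence classes intersecting K *)
Definition classes_meeting (T : finType) (e : rel T) (K : {set T}) : {set {set T}} :=
  [set mc_class e v | v in K].

Definition nbhd (T : finType) (e : rel T) (K : {set T}) : {set T} :=
  [set v | (v \notin K) && [exists u in K, e v u]].

Local Open Scope ring_scope.
Definition cutrank (T : finType) (e : rel T) (X Y : {set T}) : nat :=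
  \rank (\matrix_(i < #|X|, j < #|Y|)
           ((e (enum_val i) (enum_val j))%:R : 'F_2)).

Local Close Scope ring_scope.
Definition log2 (x : R) : R := (ln x / ln 2)%R.

(* Two vertices u, v of the clique K with the same neighbours in N(K) lie in
   the same maximal cliques: if a maximal clique C contains u but not v, then
   v is adjacent to every vertex of C (to those in K because K is a clique, to
   the others because they are neighbours of u outside K, i.e. lie in N(K)),
   so v |: C would be a larger clique.  Hence the class of a vertex of K is
   determined by its row in the K x N(K) adjacency matrix over F_2, and a
   matrix of rank r has at most 2^r distinct rows, all of them lying in its
   row space.  This gives |K~| <= 2^rho(K, N(K)), which is stronger than the
   double-logarithmic bound. *)
From mathcomp Require Import all_boot all_order all_algebra.
Set Implicit Arguments. Unset Strict Implicit. Unset Printing Implicit Defensive.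
Import GRing.Theory.
Local Open Scope ring_scope.

Lemma leq_imset_card_factor (I X Y : finType) (A : {set I}) (g : I -> X) (h : I -> Y) :
  {in A &, forall i j, h i = h j -> g i = g j} -> (#|g @: A| <= #|h @: A|)%N.
Proof.
move=> gh; case: (set_0Vmem A) => [-> | [i0 i0A]]; first by rewrite !imset0 cards0.
pose f y := g (odflt i0 [pick i in A | h i == y]).
have -> : g @: A = f @: (h @: A).
  rewrite -imset_comp; apply: eq_in_imset => i iA /=; rewrite /f.
  case: pickP => [j /andP[jA /eqP hji] | /(_ i)]; last by rewrite iA eqxx.
  exact: gh iA jA (esym hji).
exact: leq_imset_card.
Qed.

Lemma card_rows_le (F : finFieldType) m n (M : 'M[F]_(m, n)) :
  (#|[set row i M | i : 'I_m]| <= #|F| ^ \rank M)%N.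
Proof.
have rows_in_span :
    [set row i M | i : 'I_m] \subset [set u *m row_base M | u : 'rV_(\rank M)].
  apply/subsetP => _ /imsetP[i _ ->]; apply/imsetP.
  exists (row i M *m pinvmx (row_base M)) => //.
  by rewrite mulmxKpV // eq_row_base row_sub.
apply: leq_trans (subset_leq_card rows_in_span) _.
by apply: leq_trans (leq_imset_card _ _) _; rewrite card_mx mul1n.
Qed.

Lemma cliqueP (T : finType) (e : rel T) (C : {set T}) :
  reflect {in C &, forall x y, x != y -> e x y} (is_clique e C).
Proof.
apply: (iffP forall_inP) => [cC x y xC yC | cC x xC].
  exact/implyP/(forall_inP (cC x xC)).
by apply/forall_inP => y yC; apply/implyP; apply: cC.
Qed.

Section CliqueTwins.

Variables (T : finType) (e : rel T) (K : {set T}).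
Hypotheses (e_sym : symmetric e) (cliqueK : is_clique e K).

Lemma twin_mem_maximal_clique u v :
  u \in K -> v \in K -> {in nbhd e K, forall w, e u w = e v w} ->
  forall C, is_maximal_clique e C -> u \in C -> v \in C.
Proof.
move=> uK vK twins C /andP[/cliqueP adjC /forallP maxC] uC; apply: contraT => vNC.
have /cliqueP adjK := cliqueK.
have v_adj_C : {in C, forall y, e v y}.
  move=> y yC; have yv : y != v by apply: contraNneq vNC => <-.
  have [yK | yNK] := boolP (y \in K); first by apply: adjK; rewrite // eq_sym.
  have uy : e u y by apply: adjC => //; apply: contraNneq yNK => <-.
  rewrite -twins // inE yNK; apply/existsP; exists u; by rewrite uK e_sym.
have cliqueVC : is_clique e (v |: C).
  apply/cliqueP => x y; rewrite !inE => /predU1P[-> | xC] /predU1P[-> | yC].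
  - by rewrite eqxx.
  - by move=> _; apply: v_adj_C.
  - by move=> _; rewrite e_sym; apply: v_adj_C.
  - exact: adjC.
have /eqP VC_eq_C : v |: C == C by apply: (implyP (maxC _)); rewrite cliqueVC subsetUr.
by rewrite -VC_eq_C setU11 in vNC.
Qed.

Lemma twins_mc_class_eq u v :
  u \in K -> v \in K -> {in nbhd e K, forall w, e u w = e v w} ->
  mc_class e u = mc_class e v.
Proof.
move=> uK vK twins.
have same_cliques C : is_maximal_clique e C -> (u \in C) = (v \in C).
  move=> maxC; apply/idP/idP; first exact: twin_mem_maximal_clique.
  by apply: twin_mem_maximal_clique => // w wN; rewrite twins.
apply/setP => x; rewrite !inE; apply: eq_forallb => C.
by case: (boolP (is_maximal_clique e C)) => //= /same_cliques ->.
Qed.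

Lemma card_classes_meeting_le :
  (#|classes_meeting e K| <= 2 ^ cutrank e K (nbhd e K))%N.
Proof.
pose N := nbhd e K.
pose M := \matrix_(i < #|K|, j < #|N|) ((e (enum_val i) (enum_val j))%:R : 'F_2).
pose adj_row v := \row_(j < #|N|) ((e v (enum_val j))%:R : 'F_2).
have row_twins : {in K &, forall u v, adj_row u = adj_row v -> mc_class e u = mc_class e v}.
  move=> u v uK vK /rowP eq_rows; apply: twins_mc_class_eq => // w wN.
  have := eq_rows (enum_rank_in wN w); rewrite !mxE enum_rankK_in //.
  by case: (e u w); case: (e v w).
have adj_rows_sub : adj_row @: K \subset [set row i M | i : 'I_#|K|].
  apply/subsetP => _ /imsetP[v vK ->]; apply/imsetP; exists (enum_rank_in vK v) => //.
  by apply/rowP => j; rewrite !mxE enum_rankK_in.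
apply: leq_trans (leq_imset_card_factor row_twins) _.
apply: leq_trans (subset_leq_card adj_rows_sub) _.
by apply: leq_trans (card_rows_le M) _; rewrite card_Fp.
Qed.

End CliqueTwins.

(* Imported only now: Reals rebinds [_ ^ _] in nat_scope to [Nat.pow]. *)
From Stdlib Require Import Reals Lra.

Lemma INR_expn2 (n : nat) : INR (expn 2 n) = (2 ^ n)%R.
Proof. by elim: n => // n IH; rewrite expnS mult_INR IH /=; ring. Qed.

Lemma ln_nonpos (y : R) : (y <= 0)%R -> ln y = 0%R.
Proof. by move=> y_le0; rewrite /ln; case: Rlt_dec => // y_gt0; exfalso; lra. Qed.

Lemma log2_le_of_le_pow2 (y : R) (r : nat) : (y <= 2 ^ r)%R -> (log2 y <= INR r)%R.
Proof.
move=> y_le; have ln2_gt0 : (0 < ln 2)%R by have := ln_lt_2; lra.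
rewrite /log2; case: (Rle_lt_dec y 0) => [/ln_nonpos -> | y_gt0].
  by rewrite /Rdiv Rmult_0_l; apply: pos_INR.
have ln_le : (ln y <= INR r * ln 2)%R.
  rewrite -ln_pow; last lra.
  by case: y_le => [y_lt | ->]; [left; apply: ln_increasing | right].
apply: (Rmult_le_reg_r (ln 2)) => //.
rewrite /Rdiv Rmult_assoc Rinv_l ?Rmult_1_r //; lra.
Qed.

Theorem corollary7p3 (T : finType) (e : rel T) (K : {set T}) :
  simple_graph e -> is_maximal_clique e K ->
  (log2 (log2 (INR #|classes_meeting e K|)) <= INR (cutrank e K (nbhd e K)))%R.
Proof.
move=> [e_sym _] /andP[cliqueK _].
have := card_classes_meeting_le e_sym cliqueK.
set n := #|classes_meeting e K|; set r := cutrank e K (nbhd e K) => n_le.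
have log2_n_le : (log2 (INR n) <= INR r)%R.
  by apply: log2_le_of_le_pow2; rewrite -INR_expn2; apply/le_INR/leP.
apply: log2_le_of_le_pow2; apply: (Rle_trans _ _ _ log2_n_le).
by rewrite -INR_expn2; apply/le_INR/leP/ltnW/ltn_expl.
Qed.
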